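(* Let $v_1,\dots,v_n$ be vectors in an $l$-dimensional vector space over $\mathrm{GF}(2)$. Suppose that for every subset $C\subseteq\{1,\dots,n\}$ with $|C|\equiv 2 \pmod 4$ we have $\sum_{i\in C} v_i \neq \mathbf{0}$. Then $l \geq \sqrt{n}-2$. *)

From mathcomp Require Import all_boot all_order all_algebra.

From mathcomp Require Import all_boot all_order all_algebra.
From mathcomp Require Import zify.
Import GRing.Theory Num.Theory.

(* Append a coordinate 1 to every v_i.  A vector x in the left kernel of the
   resulting n x (l+1) matrix has a support C of even size with
   sum_(i in C) v_i = 0, so by hypothesis |C| = 0 mod 4: the kernel is a
   doubly even binary code.  Since |C + D| = |C| + |D| - 2|C n D|, any two
   codewords of a doubly even code meet in an even number of points, i.e. the
   kernel is self-orthogonal, so its dimension, at least n - (l + 1), is at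
   most n/2.  Hence n <= 2l + 2 <= (l + 2)^2. *)

Local Open Scope ring_scope.

Lemma F2_eq01 (a : 'F_2) : a = 0 \/ a = 1.
Proof. by case: a => [[|[|k]] // lt_k2]; [left | right]; apply: val_inj. Qed.

Lemma F2_natr_eq0 m : ((m%:R : 'F_2) == 0) = (2 %| m)%N.
Proof. by rewrite -(dvdn_pcharf (pchar_Fp (isT : prime 2))). Qed.

Section BinaryRowVectors.
Variable n : nat.
Implicit Types x y : 'rV['F_2]_n.

Definition supp x : {set 'I_n} := [set i | x 0 i != 0].

Lemma sum_row_F2 x : \sum_i x 0 i = #|supp x|%:R.
Proof.
rewrite -sum1_card natr_sum [RHS]big_mkcond /=; apply: eq_bigr => i _.
by rewrite inE; case: (F2_eq01 (x 0 i)) => ->; rewrite ?eqxx ?oner_eq0.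
Qed.

Lemma sum_scale_row_F2 (V : lmodType 'F_2) x (v : 'I_n -> V) :
  \sum_i x 0 i *: v i = \sum_(i in supp x) v i.
Proof.
rewrite [RHS]big_mkcond /=; apply: eq_bigr => i _; rewrite inE.
by case: (F2_eq01 (x 0 i)) => ->; rewrite ?scale0r ?scale1r ?eqxx ?oner_eq0.
Qed.

Lemma dot_row_F2 x y : \sum_i x 0 i * y 0 i = #|supp x :&: supp y|%:R.
Proof.
rewrite -sum1_card natr_sum [RHS]big_mkcond /=; apply: eq_bigr => i _.
by rewrite !inE; case: (F2_eq01 (x 0 i)) => ->; case: (F2_eq01 (y 0 i)) => ->;
  rewrite ?eqxx ?oner_eq0 ?mulr0 ?mul0r ?mulr1.
Qed.

Lemma supp_add x y :
  supp (x + y) = (supp x :|: supp y) :\: (supp x :&: supp y).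
Proof.
apply/setP => i; rewrite !inE mxE.
by case: (F2_eq01 (x 0 i)) => ->; case: (F2_eq01 (y 0 i)) => ->.
Qed.

Lemma card_supp_add x y :
  (#|supp (x + y)| + 2 * #|supp x :&: supp y| = #|supp x| + #|supp y|)%N.
Proof.
have sIU : supp x :&: supp y \subset supp x :|: supp y.
  exact: subset_trans (subsetIl _ _) (subsetUl _ _).
rewrite supp_add cardsD (setIidPr sIU).
by have := cardsUI (supp x) (supp y); have := subset_leq_card sIU; lia.
Qed.

Lemma doubly_even_dot_eq0 x y :
  (4 %| #|supp x|)%N -> (4 %| #|supp y|)%N -> (4 %| #|supp (x + y)|)%N ->
  \sum_i x 0 i * y 0 i = 0.
Proof.
move=> dx dy dxy; apply/eqP; rewrite dot_row_F2 F2_natr_eq0.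
by move: (card_supp_add x y) dx dy dxy; lia.
Qed.

End BinaryRowVectors.

Arguments supp {n} x.

Lemma self_orthogonal_rank {F : fieldType} {m n} (K : 'M[F]_(m, n)) :
  K *m K^T = 0 -> (2 * \rank K <= n)%N.
Proof.
move=> KKt; have := mxrank_mul_min K K^T.
by rewrite KKt mxrank0 mxrank_tr; lia.
Qed.

Section DoublyEvenKernel.
Context {n l : nat} (v : 'I_n -> 'rV['F_2]_l).
Hypothesis sum_neq0 :
  forall C : {set 'I_n}, (#|C| %% 4 = 2)%N -> \sum_(i in C) v i != 0.

Definition augmented_mx : 'M['F_2]_(n, l + 1) :=
  row_mx (\matrix_i v i) (const_mx 1).

Lemma augmented_kerP (x : 'rV_n) : x *m augmented_mx = 0 ->
  \sum_(i in supp x) v i = 0 /\ (2 %| #|supp x|)%N.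
Proof.
rewrite mul_mx_row => /eqP; rewrite row_mx_eq0 => /andP[/eqP xv0 /eqP x10].
split.
  rewrite -sum_scale_row_F2 -[RHS]xv0 mulmx_sum_row.
  by apply: eq_bigr => i _; rewrite rowK.
have := congr1 (fun M : 'M_1 => M 0 0) x10; rewrite !mxE => sum_x0.
rewrite -F2_natr_eq0 -sum_row_F2 -[X in _ == X]sum_x0.
by apply/eqP/eq_bigr => i _; rewrite mxE mulr1.
Qed.

Lemma augmented_ker_doubly_even (x : 'rV_n) :
  x *m augmented_mx = 0 -> (4 %| #|supp x|)%N.
Proof.
case/augmented_kerP => sum0 even_supp.
have : (#|supp x| %% 4 != 2)%N by apply/eqP => /sum_neq0; rewrite sum0 eqxx.
by move: even_supp; lia.
Qed.

Lemma augmented_ker_self_orthogonal :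
  kermx augmented_mx *m (kermx augmented_mx)^T = 0.
Proof.
set K := kermx augmented_mx; apply/matrixP => i j; rewrite !mxE.
have inK k : row k K *m augmented_mx = 0 by apply/sub_kermxP; apply: row_sub.
rewrite -[RHS](@doubly_even_dot_eq0 _ (row i K) (row j K)).
- by apply: eq_bigr => k _; rewrite !mxE.
- exact/augmented_ker_doubly_even/inK.
- exact/augmented_ker_doubly_even/inK.
by apply: augmented_ker_doubly_even; rewrite mulmxDl !inK addr0.
Qed.

Lemma size_le_double_dim_add2 : (n <= 2 * l + 2)%N.
Proof.
have := self_orthogonal_rank _ augmented_ker_self_orthogonal.
by rewrite mxrank_ker; have := rank_leq_col augmented_mx; lia.
Qed.

End DoublyEvenKernel.

Lemma sqrt_natr_le (R : rcfType) m k :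
  (m <= k ^ 2)%N -> Num.sqrt (m%:R : R) <= k%:R.
Proof.
move=> mk; rewrite -[leRHS]ger0_norm ?ler0n // -sqrtr_sqr.
by rewrite ler_sqrt ?exprn_ge0 ?ler0n // -natrX ler_nat.
Qed.

Local Close Scope ring_scope.

Theorem lemma4 (R : rcfType) (n l : nat) (v : 'I_n -> 'rV['F_2]_l) :
  (forall C : {set 'I_n}, #|C| %% 4 = 2 -> (\sum_(i in C) v i != 0)%R) ->
  (Num.sqrt (n%:R : R) - 2 <= l%:R)%R.
Proof.
move=> sum_neq0; have n_le := size_le_double_dim_add2 _ sum_neq0.
by rewrite lerBlDr -natrD sqrt_natr_le //; nia.
Qed.
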